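(* Assume $1-4M_0>0$ and set $\Xi:=1-4M_0$, $\lambda_1:=\frac{-1+\sqrt{\Xi}}{2}$, $\lambda_2:=\frac{-1-\sqrt{\Xi}}{2}$. For $x\in\Omega_0$ put $$P(x):=\frac{1}{\sqrt\Xi}\big(\lambda_1\partial_x u_0(x)-M_0+2\rho_0(x)\big),\qquad Q(x):=\frac{1}{\sqrt\Xi}\big(M_0-2\rho_0(x)-\lambda_2\partial_x u_0(x)\big),$$ and for $t\ge 0$, $x\in\Omega_0$, $$D(t,x):=\frac{2\rho_0(x)}{M_0}+\frac{P(x)}{\lambda_1}e^{\lambda_1 t}+\frac{Q(x)}{\lambda_2}e^{\lambda_2 t}$$ (this is the expression of $\partial_x\eta(t,x)$ for a classical solution of the Lagrangian system, as long as it exists). Then there exist $t>0$ and $x\in\Omega_0$ with $D(t,x)\le 0$ if and only if there exists $x\in\Omega_0$ such that $$\partial_x u_0(x)<0,\qquad M_0-2\rho_0(x)<\lambda_1\partial_x u_0(x),$$ and $$2\rho_0(x)\le\big(\lambda_1\partial_x u_0(x)-M_0+2\rho_0(x)\big)^{-\lambda_2/\sqrt\Xi}\big(\lambda_2\partial_x u_0(x)-M_0+2\rho_0(x)\big)^{\lambda_1/\sqrt\Xi}.$$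
   Context: $\Omega_0=(a_0,b_0)$ is a bounded open interval, $\rho_0\in H^2(\Omega_0)$ with $\rho_0>0$ on $\Omega_0$, $u_0\in H^3(\Omega_0)$ (both continuous up to the boundary), and $M_0:=\int_{\Omega_0}\rho_0(x)\,dx>0$. Note $D(0,x)=1$ for all $x$. *)

From Stdlib Require Import Reals Lra.
Open Scope R_scope.

Definition Xi (M0 : R) : R := 1 - 4 * M0.
Definition lambda1 (M0 : R) : R := (-1 + sqrt (Xi M0)) / 2.
Definition lambda2 (M0 : R) : R := (-1 - sqrt (Xi M0)) / 2.

(* P(x), Q(x); du0 is the derivative of u0, rho0x = rho0(x). *)
Definition Pfun (M0 rho0x du0x : R) : R :=
  / sqrt (Xi M0) * (lambda1 M0 * du0x - M0 + 2 * rho0x).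
Definition Qfun (M0 rho0x du0x : R) : R :=
  / sqrt (Xi M0) * (M0 - 2 * rho0x - lambda2 M0 * du0x).

Definition Dfun (M0 rho0x du0x t : R) : R :=
  2 * rho0x / M0
  + Pfun M0 rho0x du0x / lambda1 M0 * exp (lambda1 M0 * t)
  + Qfun M0 rho0x du0x / lambda2 M0 * exp (lambda2 M0 * t).

(* For fixed [x], write [s = sqrt Xi], so that [M0 = l1 l2 = (1 - s^2)/4] and
   [l1 - l2 = s].  As a function of [t], [D] starts at [D 0 = 1] and has
   derivative [e^(l2 t) (A e^(s t) - B) / s], where [A = s P] and
   [B = - s Q = A - s u0'].  If [A <= 0], [D t] dominates the convex combination
   [(1 - w) 2 rho0 / M0 + w] with [w = e^(l2 t)], hence is positive.  If [A > 0]
   and [u0' >= 0], then [B <= A] and [D] increases from [1].  If [A > 0] and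
   [u0' < 0], then [B > A] and [D] attains its minimum on [t > 0] at
   [e^(s t) = B / A], where it equals [(2 rho0 - A^(-l2/s) B^(l1/s)) / M0]. *)

From Stdlib Require Import Reals Lra.
From Coquelicot Require Import Coquelicot.
Open Scope R_scope.

Lemma le_derive_ge0 (f f' : R -> R) (a b : R) :
  (forall x, derivable_pt_lim f x (f' x)) ->
  (forall x, a < x < b -> 0 <= f' x) -> a <= b -> f a <= f b.
Proof.
  intros Hder Hpos [Hab | <-]; [|lra].
  destruct (MVT_cor2 f f' a b Hab (fun c _ => Hder c)) as [c [Hc Hcab]].
  assert (0 <= f' c) by (apply Hpos; exact Hcab).
  nra.
Qed.

Lemma min_at_derive_sign_change (f f' : R -> R) (c : R) :
  (forall x, derivable_pt_lim f x (f' x)) ->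
  (forall x, x < c -> f' x <= 0) -> (forall x, c < x -> 0 <= f' x) ->
  forall t, f c <= f t.
Proof.
  intros Hder Hneg Hpos t.
  destruct (Rle_or_lt c t) as [Hct | Htc].
  - apply (le_derive_ge0 f f'); auto; intros x Hx; apply Hpos; lra.
  - enough (- f t <= - f c) by lra.
    apply (le_derive_ge0 (fun x => - f x) (fun x => - f' x)); [| | lra].
    + intro x; apply (derivable_pt_lim_opp f x (f' x)), Hder.
    + intros x Hx; enough (f' x <= 0) by lra; apply Hneg; lra.
Qed.

Section Jacobian.

Variables s r d : R.
Hypothesis s_gt0 : 0 < s.
Hypothesis s_lt1 : s < 1.
Hypothesis r_gt0 : 0 < r.

Let M := (1 - s * s) / 4.
Let l1 := (-1 + s) / 2.
Let l2 := (-1 - s) / 2.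
Let A := l1 * d - M + 2 * r.
Let B := l2 * d - M + 2 * r.

(* [D] at a fixed [x], with [r = rho0 x], [d = u0' x] and [M0] written in terms
   of [s = sqrt Xi]. *)
Definition jac (t : R) : R :=
  2 * r / M + A / (s * l1) * exp (l1 * t) - B / (s * l2) * exp (l2 * t).

Definition jac_deriv (t : R) : R := exp (l2 * t) * (A * exp (s * t) - B) / s.

Let M_gt0 : 0 < M. Proof. unfold M; nra. Qed.
Let l1_lt0 : l1 < 0. Proof. unfold l1; lra. Qed.
Let l2_lt0 : l2 < 0. Proof. unfold l2; lra. Qed.

Let exp_l1 (t : R) : exp (l1 * t) = exp (l2 * t) * exp (s * t).
Proof. rewrite <- exp_plus; f_equal; unfold l1, l2; lra. Qed.

Lemma jac_derivable (t : R) : derivable_pt_lim jac t (jac_deriv t).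
Proof.
  apply is_derive_Reals; unfold jac, jac_deriv.
  auto_derive; [easy|].
  rewrite exp_l1; field; lra.
Qed.

Lemma jac0 : jac 0 = 1.
Proof.
  unfold jac, A, B, M, l1, l2; rewrite !Rmult_0_r, exp_0.
  field; repeat split; nra.
Qed.

Let exp_l2_le1 (t : R) : 0 <= t -> exp (l2 * t) <= 1.
Proof.
  intros [Ht | <-]; [|rewrite Rmult_0_r, exp_0; lra].
  left; rewrite <- exp_0; apply exp_increasing; nra.
Qed.

Let exp_l2_le_exp_l1 (t : R) : 0 <= t -> exp (l2 * t) <= exp (l1 * t).
Proof.
  intros Ht; rewrite exp_l1.
  assert (1 <= exp (s * t)) by (pose proof (exp_ineq1_le (s * t)); nra).
  pose proof (exp_pos (l2 * t)); nra.
Qed.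

Lemma jac_gt0_of_A_le0 (t : R) : A <= 0 -> 0 <= t -> 0 < jac t.
Proof.
  intros HA Ht.
  set (c1 := A / (s * l1)); set (c2 := - B / (s * l2)).
  assert (Hc1 : 0 <= c1).
  { assert (c1 * (s * l1) = A) by (unfold c1; field; lra).
    assert (s * l1 < 0) by nra; nra. }
  assert (Hsum : 2 * r / M + c1 + c2 = 1).
  { rewrite <- jac0; unfold jac, c1, c2; rewrite !Rmult_0_r, exp_0; field; lra. }
  assert (Hjac : jac t = 2 * r / M + c1 * exp (l1 * t) + c2 * exp (l2 * t))
    by (unfold jac, c1, c2; field; lra).
  pose proof (exp_pos (l2 * t)); pose proof (exp_l2_le1 t Ht);
    pose proof (exp_l2_le_exp_l1 t Ht).
  assert (0 < 2 * r / M) by (apply Rdiv_lt_0_compat; lra).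
  (* [c1 >= 0] lets us lower [e^(l1 t)] to [w = e^(l2 t)], leaving the convex
     combination [(1 - w) (2 r / M) + w (2 r / M + c1 + c2)]. *)
  assert (c1 * (exp (l1 * t) - exp (l2 * t)) >= 0)
    by (apply Rle_ge, Rmult_le_pos; lra).
  assert (0 <= (1 - exp (l2 * t)) * (2 * r / M)) by (apply Rmult_le_pos; lra).
  assert (jac t >= (1 - exp (l2 * t)) * (2 * r / M) + exp (l2 * t))
    by (rewrite Hjac; nra).
  lra.
Qed.

Lemma jac_ge1_of_d_ge0 (t : R) : 0 <= A -> 0 <= d -> 0 <= t -> 1 <= jac t.
Proof.
  intros HA Hd Ht; rewrite <- jac0.
  apply (le_derive_ge0 jac jac_deriv); [exact jac_derivable | | exact Ht].
  intros x [Hx _]; unfold jac_deriv.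
  assert (1 <= exp (s * x)) by (pose proof (exp_ineq1_le (s * x)); nra).
  assert (B = A - s * d) by (unfold A, B, l1, l2; lra).
  pose proof (exp_pos (l2 * x)).
  apply Rdiv_le_0_compat; [|lra].
  apply Rmult_le_pos; nra.
Qed.

Section Minimum.

Hypothesis d_lt0 : d < 0.
Hypothesis A_gt0 : 0 < A.

Let A_lt_B : A < B. Proof. unfold A, B, l1, l2; nra. Qed.

Definition tmin : R := ln (B / A) / s.

Lemma tmin_gt0 : 0 < tmin.
Proof.
  unfold tmin; apply Rdiv_lt_0_compat; [|lra].
  rewrite <- ln_1; apply ln_increasing; [lra|].
  apply Rlt_div_r; lra.
Qed.

Let exp_s_tmin : exp (s * tmin) = B / A.
Proof.
  unfold tmin; replace (s * (ln (B / A) / s)) with (ln (B / A)) by (field; lra).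
  apply exp_ln, Rdiv_lt_0_compat; lra.
Qed.

Let jac_deriv_sign (x : R) :
  (x < tmin -> jac_deriv x <= 0) /\ (tmin < x -> 0 <= jac_deriv x).
Proof.
  assert (HB : A * exp (s * tmin) = B) by (rewrite exp_s_tmin; field; lra).
  pose proof (exp_pos (l2 * x)).
  assert (Hs : 0 < / s) by (apply Rinv_0_lt_compat; lra).
  unfold jac_deriv, Rdiv; split; intro Hx.
  - assert (exp (s * x) < exp (s * tmin)) by (apply exp_increasing; nra).
    assert (A * exp (s * x) - B <= 0) by nra.
    assert (exp (l2 * x) * (A * exp (s * x) - B) <= 0) by nra; nra.
  - assert (exp (s * tmin) < exp (s * x)) by (apply exp_increasing; nra).
    assert (0 <= A * exp (s * x) - B) by nra.
    assert (0 <= exp (l2 * x) * (A * exp (s * x) - B)) by nra; nra.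
Qed.

Lemma jac_tmin_le (t : R) : jac tmin <= jac t.
Proof.
  apply (min_at_derive_sign_change jac jac_deriv); [exact jac_derivable | |];
    intros x Hx; apply jac_deriv_sign, Hx.
Qed.

Lemma jac_tmin :
  jac tmin = (2 * r - Rpower A (- l2 / s) * Rpower B (l1 / s)) / M.
Proof.
  (* The exponents sum to [(l1 - l2) / s = 1], so the product of powers is
     [A (B / A)^(l1 / s) = A e^(l1 tmin)]. *)
  assert (Hpow : Rpower A (- l2 / s) * Rpower B (l1 / s) = A * exp (l1 * tmin)).
  { unfold Rpower, tmin; rewrite ln_div by lra.
    rewrite <- (exp_ln A) at 2 by lra; rewrite <- !exp_plus.
    f_equal; unfold l1, l2; field; lra. }
  assert (Hl2 : exp (l2 * tmin) = exp (l1 * tmin) * A / B).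
  { rewrite exp_l1, exp_s_tmin; field; lra. }
  rewrite Hpow; unfold jac; rewrite Hl2.
  unfold M, l1, l2; field; repeat split; nra.
Qed.

End Minimum.

Lemma jac_nonpos_iff :
  (exists t, 0 < t /\ jac t <= 0) <->
  d < 0 /\ 0 < A /\ 2 * r <= Rpower A (- l2 / s) * Rpower B (l1 / s).
Proof.
  assert (Hdiv : forall x, x / M <= 0 <-> x <= 0).
  { intro x; assert (x / M * M = x) by (field; lra).
    assert (0 < / M) by (apply Rinv_0_lt_compat; lra).
    unfold Rdiv in *; split; intro; nra. }
  split.
  - intros [t [Ht Hjac]].
    destruct (Rle_or_lt A 0) as [HA | HA].
    { pose proof (jac_gt0_of_A_le0 t HA (Rlt_le _ _ Ht)); lra. }
    destruct (Rle_or_lt 0 d) as [Hd | Hd].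
    { pose proof (jac_ge1_of_d_ge0 t (Rlt_le _ _ HA) Hd (Rlt_le _ _ Ht)); lra. }
    pose proof (jac_tmin_le Hd HA t) as Hmin; rewrite jac_tmin in Hmin by assumption.
    repeat split; try assumption.
    enough (2 * r - Rpower A (- l2 / s) * Rpower B (l1 / s) <= 0) by lra.
    apply Hdiv; lra.
  - intros [Hd [HA Hle]].
    exists (tmin); split; [exact (tmin_gt0 Hd HA)|].
    rewrite jac_tmin by assumption; apply Hdiv; lra.
Qed.

End Jacobian.

Lemma Dfun_nonpos_iff (M0 r d : R) :
  0 < M0 -> 0 < 1 - 4 * M0 -> 0 < r ->
  (exists t, 0 < t /\ Dfun M0 r d t <= 0) <->
  d < 0 /\ M0 - 2 * r < lambda1 M0 * d /\
  2 * r <= Rpower (lambda1 M0 * d - M0 + 2 * r) (- lambda2 M0 / sqrt (Xi M0))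
           * Rpower (lambda2 M0 * d - M0 + 2 * r) (lambda1 M0 / sqrt (Xi M0)).
Proof.
  intros HM HX Hr.
  assert (Hs0 : 0 < sqrt (Xi M0)) by (apply sqrt_lt_R0; unfold Xi; lra).
  assert (Hss : sqrt (Xi M0) * sqrt (Xi M0) = 1 - 4 * M0)
    by (apply sqrt_sqrt; unfold Xi; lra).
  unfold lambda1, lambda2; set (s := sqrt (Xi M0)) in *.
  assert (Hs1 : s < 1) by nra.
  assert (HM0 : M0 = (1 - s * s) / 4) by lra.
  assert (HD : forall t, Dfun M0 r d t = jac s r d t).
  { intro t; unfold Dfun, Pfun, Qfun, lambda1, lambda2, jac; fold s; rewrite HM0.
    field; repeat split; nra. }
  assert (HA : M0 - 2 * r < (-1 + s) / 2 * d <-> 0 < (-1 + s) / 2 * d - M0 + 2 * r)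
    by lra.
  rewrite HA; clear HA.
  setoid_rewrite HD; rewrite HM0.
  exact (jac_nonpos_iff s r d Hs0 Hs1 Hr).
Qed.

Theorem proposition3p1
  (a0 b0 : R) (rho0 u0 du0 : R -> R)
  (Hab : a0 < b0)
  (Hrho_cont : forall x, a0 <= x <= b0 -> continuity_pt rho0 x)
  (Hrho_pos : forall x, a0 < x < b0 -> 0 < rho0 x)
  (Hu0_der : forall x, a0 < x < b0 -> derivable_pt_lim u0 x (du0 x))
  (pr : Riemann_integrable rho0 a0 b0)
  (HM0 : 0 < RiemannInt pr)
  (HXi : 0 < 1 - 4 * RiemannInt pr) :
  let M0 := RiemannInt pr in
  let l1 := lambda1 M0 in
  let l2 := lambda2 M0 in
  let sX := sqrt (Xi M0) in
  (exists t x, 0 < t /\ a0 < x < b0 /\ Dfun M0 (rho0 x) (du0 x) t <= 0)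
  <->
  (exists x, a0 < x < b0 /\
     du0 x < 0 /\
     M0 - 2 * rho0 x < l1 * du0 x /\
     2 * rho0 x <=
       Rpower (l1 * du0 x - M0 + 2 * rho0 x) (- l2 / sX)
       * Rpower (l2 * du0 x - M0 + 2 * rho0 x) (l1 / sX)).
Proof.
  intros M0 l1 l2 sX.
  pose proof (fun x Hx => Dfun_nonpos_iff M0 (rho0 x) (du0 x) HM0 HXi (Hrho_pos x Hx))
    as Hpoint.
  split.
  - intros [t [x [Ht [Hx HD]]]].
    exists x; split; [exact Hx|].
    apply (Hpoint x Hx); exists t; split; assumption.
  - intros [x [Hx Hcond]].
    destruct (proj2 (Hpoint x Hx) Hcond) as [t [Ht HD]].
    exists t, x; auto.
Qed.
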